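(* Let $X$ be a Banach space, let $\Pi=\{(x,y,f): x,y\in X,\ x\neq y,\ f\in D(x-y)\}\subset X\times X\times X^*$, and let $\pi:X\times X\times X^*\to X\times X$ be $\pi(x,y,f)=(x,y)$. If $Q\subset \Pi$ is such that $\pi(Q)$ is dense in $X\times X$, then for every $T\in\mathrm{Lip}_0(X)$, $$\omega(T)=\sup\Big\{\frac{|f(Tx-Ty)|}{\|x-y\|^2}: (x,y,f)\in Q\Big\}.$$ In particular, $\omega(T)$ may be computed by choosing one functional $f\in D(x-y)$ at each point $(x,y)$ of a dense subset of $X\times X$ (consisting of pairs with $x\ne y$).
   Context: $X$ is a Banach space over $\mathbb{K}=\mathbb{R}$ or $\mathbb{C}$. $\mathrm{Lip}_0(X)$ is the set of Lipschitz maps $T:X\to X$ with $T(0)=0$, normed by $\|T\|_L=\sup\{\|Tx-Ty\|/\|x-y\|: x\neq y\}$. For $x\in X$, $D(x)=\{x^*\in X^*: x^*(x)=\|x^*\|\|x\|=\|x\|^2\}$. For $T\in\mathrm{Lip}_0(X)$, $W(T)=\{ f(Tx-Ty)/\|x-y\|^2 : x\neq y,\ f\in D(x-y)\}$ and $\omega(T)=\sup\{|\lambda|:\lambda\in W(T)\}$. *)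

From Stdlib Require Import Reals.
Open Scope R_scope.

Record Scalars := {
  sc :> Type;
  sc0 : sc; sc1 : sc;
  scadd : sc -> sc -> sc;
  scmul : sc -> sc -> sc;
  scopp : sc -> sc;
  scabs : sc -> R;
  scR : R -> sc
}.

Definition R_scalars : Scalars :=
  {| sc := R; sc0 := 0; sc1 := 1; scadd := Rplus; scmul := Rmult;
     scopp := Ropp; scabs := Rabs; scR := fun r => r |}.

Record Cplx := mkC { Cre : R; Cim : R }.
Definition Cadd (z w : Cplx) := mkC (Cre z + Cre w) (Cim z + Cim w).
Definition Cmul (z w : Cplx) :=
  mkC (Cre z * Cre w - Cim z * Cim w) (Cre z * Cim w + Cim z * Cre w).
Definition Copp (z : Cplx) := mkC (- Cre z) (- Cim z).
Definition Cmod (z : Cplx) := sqrt (Cre z ^ 2 + Cim z ^ 2).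

Definition C_scalars : Scalars :=
  {| sc := Cplx; sc0 := mkC 0 0; sc1 := mkC 1 0; scadd := Cadd; scmul := Cmul;
     scopp := Copp; scabs := Cmod; scR := fun r => mkC r 0 |}.

Definition Kof (b : bool) : Scalars := if b then R_scalars else C_scalars.

Record BanachSpace (K : Scalars) := {
  vT :> Type;
  v0 : vT;
  vadd : vT -> vT -> vT;
  vopp : vT -> vT;
  vscal : K -> vT -> vT;
  vnorm : vT -> R;
  vadd_assoc : forall x y z, vadd x (vadd y z) = vadd (vadd x y) z;
  vadd_comm : forall x y, vadd x y = vadd y x;
  vadd_0 : forall x, vadd x v0 = x;
  vadd_opp : forall x, vadd x (vopp x) = v0;
  vscal_1 : forall x, vscal (sc1 K) x = x;
  vscal_mul : forall a c x, vscal a (vscal c x) = vscal (scmul K a c) x;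
  vscal_addv : forall a x y, vscal a (vadd x y) = vadd (vscal a x) (vscal a y);
  vscal_adds : forall a c x, vscal (scadd K a c) x = vadd (vscal a x) (vscal c x);
  vnorm_eq0 : forall x, vnorm x = 0 -> x = v0;
  vnorm_scal : forall a x, vnorm (vscal a x) = scabs K a * vnorm x;
  vnorm_triangle : forall x y, vnorm (vadd x y) <= vnorm x + vnorm y;
  vcomplete : forall u : nat -> vT,
    (forall eps, 0 < eps -> exists N, forall n m, (n >= N)%nat -> (m >= N)%nat ->
        vnorm (vadd (u n) (vopp (u m))) < eps) ->
    exists l, forall eps, 0 < eps -> exists N, forall n, (n >= N)%nat ->
        vnorm (vadd (u n) (vopp l)) < eps
}.

Arguments v0 {K} _.
Arguments vadd {K _}.
Arguments vopp {K _}.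
Arguments vscal {K _}.
Arguments vnorm {K _}.

Definition vsub {K : Scalars} {X : BanachSpace K} (x y : X) : X := vadd x (vopp y).

Definition is_dual {K : Scalars} (X : BanachSpace K) (f : X -> K) : Prop :=
  (forall x y, f (vadd x y) = scadd K (f x) (f y)) /\
  (forall a x, f (vscal a x) = scmul K a (f x)) /\
  (exists M, forall x, scabs K (f x) <= M * vnorm x).

Definition dual_norm {K : Scalars} (X : BanachSpace K) (f : X -> K) (r : R) : Prop :=
  is_lub (fun t => exists x : X, vnorm x <= 1 /\ t = scabs K (f x)) r.

Definition InD {K : Scalars} (X : BanachSpace K) (x : X) (f : X -> K) : Prop :=
  is_dual X f /\
  exists nf, dual_norm X f nf /\
    f x = scR K (nf * vnorm x) /\ nf * vnorm x = vnorm x ^ 2.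

Definition Lip0 {K : Scalars} (X : BanachSpace K) (T : X -> X) : Prop :=
  T (v0 X) = v0 X /\
  exists L, forall x y : X, vnorm (vsub (T x) (T y)) <= L * vnorm (vsub x y).

Definition W {K : Scalars} (X : BanachSpace K) (T : X -> X) (lam : K) : Prop :=
  exists (x y : X) (f : X -> K), x <> y /\ InD X (vsub x y) f /\
    lam = scmul K (f (vsub (T x) (T y))) (scR K (/ (vnorm (vsub x y) ^ 2))).

Definition absW {K : Scalars} (X : BanachSpace K) (T : X -> X) (t : R) : Prop :=
  exists lam, W X T lam /\ t = scabs K lam.

Definition is_omega {K : Scalars} (X : BanachSpace K) (T : X -> X) (r : R) : Prop :=
  is_lub (absW X T) r.

From Stdlib Require Import Reals Lra Psatz.
Open Scope R_scope.

(* Every quotient |g(Tx'-Ty')|/||x'-y'||^2 with (x',y',g) in Q lies in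
   the numerical range, so it suffices to approximate any value |f(Tx-Ty)|/||x-y||^2,
   f in D(x-y), from below by values coming from Q.  Since D(.) is not continuous,
   one does not approximate (x,y) directly: writing v = Tx-Ty and choosing a unimodular
   c with Re(c f(v)) = |f(v)|, one moves x to x + s c v for a small s > 0 and picks
   (x',y',g) in Q within s^2 of (x + s c v, y).  The key geometric fact
   [support_near] is that a normalized support functional g at a point near
   (x + p) - y nearly dominates f in the direction p; hence Re(c g(v)) is almost
   ||x'-y'|| |f(v)|/||x-y||, and Lipschitz continuity of T transfers this to
   g(Tx'-Ty') ([perturbed_bound]). *)

Definition re (b : bool) : Kof b -> R :=
  match b as b0 return Kof b0 -> R with
  | true => fun x => x
  | false => fun z => Cre z
  end.

Section Scalars.
Context {b : bool}.
Local Notation K := (Kof b).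

Lemma re_add (a c : K) : re b (scadd _ a c) = re b a + re b c.
Proof. destruct b; reflexivity. Qed.

Lemma re_scR r : re b (scR K r) = r.
Proof. destruct b; reflexivity. Qed.

Lemma re_scR_mul s (k : K) : re b (scmul _ (scR _ s) k) = s * re b k.
Proof. destruct b; simpl; [reflexivity | destruct k; simpl; ring]. Qed.

Lemma re_one_mul (k : K) : re b (scmul _ (sc1 _) k) = re b k.
Proof. destruct b; simpl; [ring | destruct k; simpl; ring]. Qed.

Lemma mul_add (c a d : K) : scmul _ c (scadd _ a d) = scadd _ (scmul _ c a) (scmul _ c d).
Proof.
  destruct b; simpl; [ring | destruct c, a, d; unfold Cmul, Cadd; simpl; f_equal; ring].
Qed.

Lemma abs_ge0 (a : K) : 0 <= scabs _ a.
Proof. destruct b; simpl; [apply Rabs_pos | apply sqrt_pos]. Qed.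

Lemma re_abs (a : K) : Rabs (re b a) <= scabs _ a.
Proof.
  destruct b; simpl; [lra |].
  destruct a as [p q]; unfold Cmod; simpl.
  rewrite <- sqrt_Rsqr_abs. apply sqrt_le_1_alt. unfold Rsqr. nra.
Qed.

Lemma abs_mul (a c : K) : scabs _ (scmul _ a c) = scabs _ a * scabs _ c.
Proof.
  destruct b; simpl; [apply Rabs_mult |].
  destruct a as [p q], c as [r s]; unfold Cmod; simpl.
  rewrite <- sqrt_mult_alt by nra. f_equal. ring.
Qed.

Lemma abs_scR r : scabs K (scR _ r) = Rabs r.
Proof.
  destruct b; simpl; [reflexivity |]. unfold Cmod; simpl.
  rewrite <- sqrt_Rsqr_abs. f_equal. unfold Rsqr. ring.
Qed.

Lemma abs_one : scabs K (sc1 _) = 1.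
Proof.
  destruct b; simpl; [apply Rabs_R1 |]. unfold Cmod; simpl.
  match goal with |- sqrt ?e = _ => replace e with 1 by ring end. apply sqrt_1.
Qed.

Lemma abs_minus_one : scabs K (scopp _ (sc1 _)) = 1.
Proof.
  destruct b; simpl; [rewrite Rabs_Ropp; apply Rabs_R1 |]. unfold Cmod; simpl.
  match goal with |- sqrt ?e = _ => replace e with 1 by ring end. apply sqrt_1.
Qed.

Lemma one_add_minus_one : scadd K (sc1 _) (scopp _ (sc1 _)) = scR _ 0.
Proof. destruct b; simpl; [change (1 + - 1 = 0); ring | unfold Cadd; simpl; f_equal; ring]. Qed.

Lemma zero_add_zero : scadd K (scR _ 0) (scR _ 0) = scR _ 0.
Proof. destruct b; simpl; [change (0 + 0 = 0); ring | unfold Cadd; simpl; f_equal; ring]. Qed.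

Lemma rotate_to_abs (a : K) : exists c, scabs _ c = 1 /\ re b (scmul _ c a) = scabs _ a.
Proof.
  destruct b; simpl in *.
  - destruct (Rle_lt_dec 0 a).
    + exists 1. rewrite Rabs_R1, Rabs_pos_eq by lra. split; ring.
    + exists (Ropp 1). rewrite Rabs_Ropp, Rabs_R1, Rabs_left by lra. split; ring.
  - destruct a as [p q]. unfold Cmod; simpl.
    replace (p * (p * 1) + q * (q * 1)) with (p * p + q * q) by ring.
    destruct (Req_dec (p * p + q * q) 0) as [H0 | H0].
    + exists (mkC 1 0); simpl. rewrite H0, sqrt_0. split; [| nra].
      match goal with |- sqrt ?e = _ => replace e with 1 by ring end. apply sqrt_1.
    + set (r := sqrt (p * p + q * q)).
      assert (Hr : r * r = p * p + q * q) by (apply sqrt_sqrt; nra).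
      assert (Hr0 : r <> 0) by (intro E; rewrite E in Hr; lra).
      exists (mkC (p / r) (- q / r)); simpl. split.
      * match goal with |- sqrt ?e = _ => replace e with 1 end; [apply sqrt_1 |].
        field_simplify; [| exact Hr0].
        replace (p ^ 2 + q ^ 2) with (r * r) by (rewrite Hr; ring). field. exact Hr0.
      * field_simplify; [| exact Hr0].
        replace (p ^ 2 + q ^ 2) with (r * r) by (rewrite Hr; ring). field. exact Hr0.
Qed.

End Scalars.

Arguments vadd_assoc {K _}. Arguments vadd_comm {K _}. Arguments vadd_0 {K _}.
Arguments vadd_opp {K _}. Arguments vscal_1 {K _}. Arguments vscal_adds {K _}.
Arguments vnorm_eq0 {K _}. Arguments vnorm_scal {K _}. Arguments vnorm_triangle {K _}.

Section NormedSpace.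
Context {b : bool}.
Local Notation K := (Kof b).
Context {X : BanachSpace K}.

Lemma vadd_0l (x : X) : vadd (v0 X) x = x.
Proof. rewrite vadd_comm. apply vadd_0. Qed.

Lemma vadd_opp_l (x : X) : vadd (vopp x) x = v0 X.
Proof. rewrite vadd_comm. apply vadd_opp. Qed.

Lemma opp_unique (x y : X) : vadd x y = v0 X -> y = vopp x.
Proof.
  intro H. rewrite <- (vadd_0l y), <- (vadd_opp_l x), <- vadd_assoc, H, vadd_0.
  reflexivity.
Qed.

Lemma vopp_vsub (x y : X) : vopp (vsub x y) = vsub y x.
Proof.
  symmetry. apply opp_unique. unfold vsub.
  rewrite <- vadd_assoc, (vadd_assoc (vopp y) y), vadd_opp_l, vadd_0l, vadd_opp.
  reflexivity.
Qed.

Lemma vsub_chain (x y z : X) : vadd (vsub x y) (vsub y z) = vsub x z.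
Proof.
  unfold vsub. rewrite <- vadd_assoc, (vadd_assoc (vopp y) y), vadd_opp_l, vadd_0l.
  reflexivity.
Qed.

Lemma vsub_add_l (x p : X) : vsub (vadd x p) x = p.
Proof. unfold vsub. rewrite (vadd_comm x p), <- vadd_assoc, vadd_opp, vadd_0. reflexivity. Qed.

Lemma vsub_eq0 (x y : X) : vsub x y = v0 X -> x = y.
Proof.
  intro H. rewrite <- (vadd_0 x), <- (vadd_opp_l y), vadd_assoc.
  change (vadd (vsub x y) y = y). rewrite H. apply vadd_0l.
Qed.

Lemma vscal_zero (x : X) : vscal (scR _ 0) x = v0 X.
Proof.
  set (z := vscal (scR _ 0) x).
  assert (Hzz : vadd z z = z) by (unfold z; rewrite <- vscal_adds, zero_add_zero; reflexivity).
  rewrite <- (vsub_add_l z z). unfold vsub. rewrite Hzz. apply vadd_opp.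
Qed.

Lemma vnorm0 : vnorm (v0 X) = 0.
Proof. rewrite <- (vscal_zero (v0 X)), vnorm_scal, abs_scR, Rabs_R0. ring. Qed.

Lemma vnorm_opp (x : X) : vnorm (vopp x) = vnorm x.
Proof.
  assert (Hopp : vopp x = vscal (scopp _ (sc1 _)) x).
  { symmetry. apply opp_unique. rewrite <- (vscal_1 x) at 1.
    rewrite <- vscal_adds, one_add_minus_one. apply vscal_zero. }
  rewrite Hopp, vnorm_scal, abs_minus_one. ring.
Qed.

Lemma vnorm_ge0 (x : X) : 0 <= vnorm x.
Proof.
  pose proof (vnorm_triangle x (vopp x)) as Htri.
  rewrite vadd_opp, vnorm0, vnorm_opp in Htri. lra.
Qed.

Lemma vnorm_sub_sym (x y : X) : vnorm (vsub x y) = vnorm (vsub y x).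
Proof. rewrite <- vnorm_opp, vopp_vsub. reflexivity. Qed.

Lemma vnorm_pos (x y : X) : x <> y -> 0 < vnorm (vsub x y).
Proof.
  intro Hxy. destruct (vnorm_ge0 (vsub x y)) as [Hpos | Hzero]; [exact Hpos |].
  exfalso. apply Hxy, vsub_eq0, vnorm_eq0. auto.
Qed.

Lemma vsub_triangle (x y z : X) : vnorm (vsub x z) <= vnorm (vsub x y) + vnorm (vsub y z).
Proof. rewrite <- (vsub_chain x y z). apply vnorm_triangle. Qed.

Lemma dual_bound (g : X -> K) nf : is_dual X g -> dual_norm X g nf ->
  forall z, scabs _ (g z) <= nf * vnorm z.
Proof.
  intros [_ [Hscal _]] [Hub _] z.
  destruct (vnorm_ge0 z) as [Hz | Hz].
  - assert (Hinv : 0 <= / vnorm z) by (left; apply Rinv_0_lt_compat; lra).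
    assert (Hunit : / vnorm z * scabs _ (g z) <= nf).
    { apply Hub. exists (vscal (scR _ (/ vnorm z)) z).
      rewrite vnorm_scal, Hscal, !abs_mul, abs_scR, Rabs_pos_eq by exact Hinv.
      split; [right; field; lra | reflexivity]. }
    apply (Rmult_le_compat_l (vnorm z)) in Hunit; [| lra].
    rewrite <- Rmult_assoc, Rinv_r in Hunit by lra. lra.
  - rewrite <- Hz. symmetry in Hz. apply vnorm_eq0 in Hz.
    rewrite Hz, <- (vscal_zero (v0 X)), Hscal, abs_mul, abs_scR, Rabs_R0. lra.
Qed.

Definition rpart (c : K) (g : X -> K) (z : X) : R := re b (scmul _ c (g z)).

Lemma rpart_add c g : is_dual X g ->
  forall p q, rpart c g (vadd p q) = rpart c g p + rpart c g q.
Proof. intros [Hadd _] p q. unfold rpart. rewrite Hadd, mul_add, re_add. reflexivity. Qed.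

Lemma rpart_sub c g : is_dual X g ->
  forall p q, rpart c g (vsub p q) = rpart c g p - rpart c g q.
Proof.
  intros Hg p q.
  assert (Hzero : rpart c g (v0 X) = 0).
  { pose proof (rpart_add c g Hg (v0 X) (v0 X)) as H. rewrite vadd_0 in H. lra. }
  assert (Hopp : rpart c g (vopp q) = - rpart c g q).
  { pose proof (rpart_add c g Hg q (vopp q)) as H. rewrite vadd_opp, Hzero in H. lra. }
  unfold vsub. rewrite rpart_add, Hopp by exact Hg. ring.
Qed.

Lemma rpart_bound c g nf : scabs _ c = 1 -> is_dual X g -> dual_norm X g nf ->
  forall z, Rabs (rpart c g z) <= nf * vnorm z.
Proof.
  intros Hc Hg Hnf z. unfold rpart. eapply Rle_trans; [apply re_abs |].
  rewrite abs_mul, Hc, Rmult_1_l. apply dual_bound; assumption.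
Qed.

Lemma rpart_direction c g s v : is_dual X g ->
  rpart (sc1 _) g (vscal (scR _ s) (vscal c v)) = s * rpart c g v.
Proof.
  intros [_ [Hscal _]]. unfold rpart. rewrite re_one_mul, !Hscal, re_scR_mul. reflexivity.
Qed.

Definition supporting (u : X) (g : X -> K) : Prop :=
  is_dual X g /\ dual_norm X g (vnorm u) /\ rpart (sc1 _) g u = vnorm u ^ 2.

Lemma InD_supporting (u : X) g : 0 < vnorm u -> InD X u g -> supporting u g.
Proof.
  intros Hu [Hg [nf [Hnf [Hgu Heq]]]].
  assert (nf = vnorm u) by (apply (Rmult_eq_reg_r (vnorm u)); [rewrite Heq; ring | lra]).
  subst nf. split; [exact Hg | split; [exact Hnf |]].
  unfold rpart. rewrite re_one_mul, Hgu, re_scR. exact Heq.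
Qed.

Lemma support_near (x y x2 y2 p : X) (f g : X -> K) (delta : R) :
  0 < vnorm (vsub x y) -> 0 < vnorm (vsub x2 y2) ->
  supporting (vsub x y) f -> supporting (vsub x2 y2) g ->
  vnorm (vsub (vadd x p) x2) <= delta -> vnorm (vsub y y2) <= delta ->
  vnorm (vsub x2 y2) * (rpart (sc1 _) f p / vnorm (vsub x y) - 4 * delta)
    <= rpart (sc1 _) g p.
Proof.
  set (n := vnorm (vsub x y)). set (m := vnorm (vsub x2 y2)).
  intros Hn Hm [Hf [Hfn Hfu]] [Hg [Hgn Hgw]] Hd1 Hd2.
  fold n in Hfn, Hfu. fold m in Hgn, Hgw.
  pose proof (rpart_bound _ f n abs_one Hf Hfn) as Bf.
  pose proof (rpart_bound _ g m abs_one Hg Hgn) as Bg.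
  rewrite rpart_sub in Hfu, Hgw by assumption.
  assert (Hlong : n + rpart (sc1 _) f p / n <= vnorm (vsub (vadd x p) y)).
  { pose proof (Bf (vsub (vadd x p) y)) as H.
    rewrite rpart_sub, rpart_add in H by exact Hf.
    pose proof (Rle_abs (rpart (sc1 _) f x + rpart (sc1 _) f p - rpart (sc1 _) f y)).
    apply (Rmult_le_reg_l n); [exact Hn |].
    replace (n * (n + rpart (sc1 _) f p / n)) with (n ^ 2 + rpart (sc1 _) f p) by (field; lra).
    lra. }
  assert (Hm_lower : vnorm (vsub (vadd x p) y) <= m + 2 * delta).
  { pose proof (vsub_triangle (vadd x p) x2 y). pose proof (vsub_triangle x2 y2 y) as Htri.
    fold m in Htri. rewrite vnorm_sub_sym in Hd2. lra. }
  assert (Hm_sq : m ^ 2 <= m * n + rpart (sc1 _) g p + 2 * m * delta).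
  { pose proof (Bg (vsub x y)) as B1. pose proof (Bg (vsub (vadd x p) x2)) as B2.
    pose proof (Bg (vsub y y2)) as B3.
    rewrite !rpart_sub, rpart_add in * by exact Hg. fold n in B1.
    pose proof (Rle_abs (rpart (sc1 _) g x - rpart (sc1 _) g y)).
    pose proof (Rle_abs (- (rpart (sc1 _) g x + rpart (sc1 _) g p - rpart (sc1 _) g x2))) as H2.
    pose proof (Rle_abs (rpart (sc1 _) g y - rpart (sc1 _) g y2)).
    rewrite Rabs_Ropp in H2.
    assert (m * vnorm (vsub (vadd x p) x2) <= m * delta) by (apply Rmult_le_compat_l; lra).
    assert (m * vnorm (vsub y y2) <= m * delta) by (apply Rmult_le_compat_l; lra).
    lra. }
  assert (m * (m - n - 2 * delta) <= rpart (sc1 _) g p) by nra.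
  assert (m * (rpart (sc1 _) f p / n - 4 * delta) <= m * (m - n - 2 * delta))
    by (apply Rmult_le_compat_l; lra).
  lra.
Qed.

Lemma rpart_lipschitz (T : X -> X) (L : R) c g m (x y x2 y2 : X) :
  0 <= m -> (forall a a' : X, vnorm (vsub (T a) (T a')) <= L * vnorm (vsub a a')) ->
  scabs _ c = 1 -> is_dual X g -> dual_norm X g m ->
  rpart c g (vsub (T x) (T y)) - m * L * (vnorm (vsub x2 x) + vnorm (vsub y2 y))
    <= rpart c g (vsub (T x2) (T y2)).
Proof.
  intros Hm HL Hc Hg Hgn.
  pose proof (rpart_bound c g m Hc Hg Hgn (vsub (T x2) (T x))) as B1.
  pose proof (rpart_bound c g m Hc Hg Hgn (vsub (T y2) (T y))) as B2.
  rewrite !rpart_sub in * by exact Hg.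
  pose proof (Rle_abs (- (rpart c g (T x2) - rpart c g (T x)))) as H1. rewrite Rabs_Ropp in H1.
  pose proof (Rle_abs (rpart c g (T y2) - rpart c g (T y))).
  assert (m * vnorm (vsub (T x2) (T x)) <= m * (L * vnorm (vsub x2 x)))
    by (apply Rmult_le_compat_l; auto).
  assert (m * vnorm (vsub (T y2) (T y)) <= m * (L * vnorm (vsub y2 y)))
    by (apply Rmult_le_compat_l; auto).
  nra.
Qed.

Lemma perturbed_bound (T : X -> X) (L : R) (x y x2 y2 : X) (f g : X -> K) (c : K) (s : R) :
  0 <= L -> (forall a a' : X, vnorm (vsub (T a) (T a')) <= L * vnorm (vsub a a')) ->
  0 < vnorm (vsub x y) -> 0 < vnorm (vsub x2 y2) ->
  supporting (vsub x y) f -> supporting (vsub x2 y2) g ->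
  scabs _ c = 1 ->
  re b (scmul _ c (f (vsub (T x) (T y)))) = scabs _ (f (vsub (T x) (T y))) ->
  0 < s -> s <= 1 ->
  vnorm (vsub (vadd x (vscal (scR _ s) (vscal c (vsub (T x) (T y))))) x2) <= s * s ->
  vnorm (vsub y y2) <= s * s ->
  vnorm (vsub x2 y2) <= vnorm (vsub x y) + s * (vnorm (vsub (T x) (T y)) + 2) /\
  vnorm (vsub x2 y2) * (scabs _ (f (vsub (T x) (T y))) / vnorm (vsub x y)
                        - s * (4 + L * (vnorm (vsub (T x) (T y)) + 2)))
    <= scabs _ (g (vsub (T x2) (T y2))).
Proof.
  set (n := vnorm (vsub x y)). set (m := vnorm (vsub x2 y2)).
  set (v := vsub (T x) (T y)). set (V := vnorm v). set (alpha := scabs _ (f v) / n).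
  set (p := vscal (scR _ s) (vscal c v)).
  intros HL0 HL Hn Hm Hfs Hgs Hc Hcv Hs0 Hs1 Hd1 Hd2.
  pose proof Hfs as [Hfd _]. pose proof Hgs as [Hgd [Hgn _]].
  assert (HV : 0 <= V) by apply vnorm_ge0.
  assert (Hp : vnorm (vsub (vadd x p) x) = s * V).
  { rewrite vsub_add_l. unfold p.
    rewrite !vnorm_scal, abs_scR, Hc, Rabs_pos_eq by lra. unfold V. ring. }
  assert (Hdx : vnorm (vsub x2 x) <= s * V + s * s).
  { pose proof (vsub_triangle x2 (vadd x p) x). rewrite vnorm_sub_sym in Hd1. lra. }
  assert (Hdy : vnorm (vsub y2 y) <= s * s) by (rewrite vnorm_sub_sym; lra).
  split.
  { pose proof (vsub_triangle x2 x y2) as H1. pose proof (vsub_triangle x y y2) as H2.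
    fold m in H1. fold n in H2. nra. }
  assert (Hdir : m * (alpha - 4 * s) <= rpart c g v).
  { pose proof (support_near x y x2 y2 p f g (s * s) Hn Hm Hfs Hgs Hd1 Hd2) as Hnear.
    unfold p in Hnear. rewrite !rpart_direction in Hnear by assumption.
    unfold rpart at 1 in Hnear. rewrite Hcv in Hnear. fold n m alpha in Hnear.
    apply (Rmult_le_reg_l s); [exact Hs0 |].
    replace (s * (m * (alpha - 4 * s))) with (m * (s * scabs _ (f v) / n - 4 * (s * s)))
      by (unfold alpha; field; lra). exact Hnear. }
  pose proof (rpart_lipschitz T L c g m x y x2 y2 (Rlt_le _ _ Hm) HL Hc Hgd Hgn) as Hlip.
  fold v in Hlip.
  pose proof (re_abs (scmul _ c (g (vsub (T x2) (T y2))))) as Hre.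
  rewrite abs_mul, Hc, Rmult_1_l in Hre.
  pose proof (Rle_abs (rpart c g (vsub (T x2) (T y2)))).
  assert (Hsum : vnorm (vsub x2 x) + vnorm (vsub y2 y) <= s * (V + 2)) by nra.
  assert (Hmove : m * L * (vnorm (vsub x2 x) + vnorm (vsub y2 y)) <= m * L * (s * (V + 2)))
    by (apply Rmult_le_compat_l; nra).
  unfold rpart in *. lra.
Qed.

End NormedSpace.

Lemma small_step (D E : R) : 0 <= D -> 0 < E -> exists s, 0 < s /\ s <= 1 /\ s * D <= E.
Proof.
  intros HD HE. exists (Rmin 1 (E / (D + 1))).
  assert (Hq : 0 < E / (D + 1)) by (apply Rdiv_lt_0_compat; lra).
  split; [apply Rmin_pos; lra | split; [apply Rmin_l |]].
  apply Rle_trans with (E / (D + 1) * D).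
  - apply Rmult_le_compat_r; [exact HD | apply Rmin_r].
  - apply (Rmult_le_reg_r (D + 1)); [lra |].
    replace (E / (D + 1) * D * (D + 1)) with (E * D) by (field; lra). nra.
Qed.

Lemma ratio_bound (n m s alpha A M K eps : R) :
  0 < n -> 0 < m -> 0 <= s -> 0 <= alpha -> 0 <= M -> 0 <= A -> 0 <= eps ->
  m <= n + s * M -> m * (alpha - s * K) <= A ->
  s * (M * (alpha / n) + K) <= eps * n ->
  alpha / n - eps <= A / m ^ 2.
Proof.
  intros Hn Hm Hs Ha HM HA Heps Hmle Hlow Hsmall.
  assert (HAm : 0 <= A / m ^ 2) by (apply Rle_mult_inv_pos; [exact HA | nra]).
  set (t := alpha / n - eps).
  destruct (Rle_lt_dec t 0) as [Ht | Ht]; [lra |].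
  assert (Htn : t * n = alpha - eps * n) by (unfold t; field; lra).
  assert (Hsm : s * M * t <= s * M * (alpha / n)).
  { apply Rmult_le_compat_l; [nra | unfold t; lra]. }
  assert (Htm : t * m <= alpha - s * K).
  { assert (t * m <= t * (n + s * M)) by (apply Rmult_le_compat_l; lra). nra. }
  assert (Htm2 : t * m ^ 2 <= A) by nra.
  apply (Rmult_le_reg_r (m ^ 2)); [nra |].
  replace (A / m ^ 2 * m ^ 2) with A by (field; lra). exact Htm2.
Qed.

Lemma approx_from_Q b (X : BanachSpace (Kof b))
  (Q : X -> X -> (X -> Kof b) -> Prop)
  (HQ : forall x y f, Q x y f -> x <> y /\ InD X (vsub x y) f)
  (Hdense : forall (x y : X) (eps : R), 0 < eps ->
     exists x' y' f, Q x' y' f /\ vnorm (vsub x x') < eps /\ vnorm (vsub y y') < eps)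
  (T : X -> X) (L : R) (HL0 : 0 <= L)
  (HL : forall x y : X, vnorm (vsub (T x) (T y)) <= L * vnorm (vsub x y))
  (x y : X) (f : X -> Kof b) (Hxy : x <> y) (Hf : InD X (vsub x y) f)
  (eps : R) (Heps : 0 < eps) :
  exists x2 y2 g, Q x2 y2 g /\
    scabs _ (f (vsub (T x) (T y))) / vnorm (vsub x y) ^ 2 - eps <=
    scabs _ (g (vsub (T x2) (T y2))) / vnorm (vsub x2 y2) ^ 2.
Proof.
  set (n := vnorm (vsub x y)). set (v := vsub (T x) (T y)).
  set (alpha := scabs _ (f v) / n). set (V := vnorm v).
  assert (Hn : 0 < n) by (apply vnorm_pos; exact Hxy).
  assert (HV : 0 <= V) by apply vnorm_ge0.
  assert (Ha : 0 <= alpha) by (apply Rle_mult_inv_pos; [apply abs_ge0 | exact Hn]).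
  set (Kc := 4 + L * (V + 2)).
  destruct (small_step ((V + 2) * (alpha / n) + Kc) (eps * n)) as [s [Hs0 [Hs1 Hsmall]]].
  { unfold Kc. assert (0 <= alpha / n) by (apply Rle_mult_inv_pos; lra). nra. }
  { nra. }
  destruct (rotate_to_abs (f v)) as [c [Hc Hcv]].
  destruct (Hdense (vadd x (vscal (scR _ s) (vscal c v))) y (s * s))
    as [x2 [y2 [g [HQ2 [Hd1 Hd2]]]]]; [nra |].
  exists x2, y2, g. split; [exact HQ2 |].
  destruct (HQ _ _ _ HQ2) as [Hxy2 Hg].
  assert (Hm : 0 < vnorm (vsub x2 y2)) by (apply vnorm_pos; exact Hxy2).
  destruct (perturbed_bound T L x y x2 y2 f g c s HL0 HL Hn Hm
              (InD_supporting _ _ Hn Hf) (InD_supporting _ _ Hm Hg) Hc Hcv Hs0 Hs1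
              (Rlt_le _ _ Hd1) (Rlt_le _ _ Hd2)) as [Hmle Hlow].
  replace (scabs _ (f v) / n ^ 2) with (alpha / n) by (unfold alpha; field; lra).
  apply (ratio_bound n _ s alpha _ (V + 2) Kc eps); try assumption; try lra.
  apply abs_ge0.
Qed.

Lemma lub_equiv (A B : R -> Prop) :
  (forall t, B t -> A t) ->
  (forall t, A t -> forall eps, 0 < eps -> exists t', B t' /\ t - eps <= t') ->
  forall r, is_lub A r <-> is_lub B r.
Proof.
  intros HBA HAB r.
  assert (Hub : forall u, is_upper_bound A u <-> is_upper_bound B u).
  { intro u. split.
    - intros H t Ht. apply H, HBA, Ht.
    - intros H t Ht. apply Rnot_lt_le. intro Hlt.
      destruct (HAB t Ht ((t - u) / 2)) as [t' [Ht' Hlt']]; [lra |].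
      pose proof (H t' Ht'). lra. }
  split; intros [H1 H2]; split; try (apply Hub, H1);
    intros u Hu; apply H2, Hub, Hu.
Qed.

Theorem corollary2p2 (b : bool) (X : BanachSpace (Kof b))
  (Q : X -> X -> (X -> Kof b) -> Prop)
  (HQ : forall x y f, Q x y f -> x <> y /\ InD X (vsub x y) f)
  (Hdense : forall (x y : X) (eps : R), 0 < eps ->
     exists x' y' f, Q x' y' f /\ vnorm (vsub x x') < eps /\ vnorm (vsub y y') < eps)
  (T : X -> X) (HT : Lip0 X T) :
  forall r : R,
    is_omega X T r <->
    is_lub (fun t => exists x y f, Q x y f /\
              t = scabs (Kof b) (f (vsub (T x) (T y))) / vnorm (vsub x y) ^ 2) r.
Proof.
  destruct HT as [_ [L HL]].
  assert (HLabs : forall x y : X, vnorm (vsub (T x) (T y)) <= Rabs L * vnorm (vsub x y)).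
  { intros x y. eapply Rle_trans; [apply HL |].
    apply Rmult_le_compat_r; [apply vnorm_ge0 | apply Rle_abs]. }
  assert (Habs : forall (g : X -> Kof b) (u w : X), 0 < vnorm u ->
            scabs _ (scmul _ (g w) (scR _ (/ (vnorm u ^ 2)))) = scabs _ (g w) / vnorm u ^ 2).
  { intros g u w Hu. rewrite abs_mul, abs_scR, Rabs_pos_eq; [reflexivity |].
    left. apply Rinv_0_lt_compat. nra. }
  apply lub_equiv.
  - intros t [x [y [f [Hq Ht]]]]. destruct (HQ _ _ _ Hq) as [Hxy Hf].
    exists (scmul _ (f (vsub (T x) (T y))) (scR _ (/ (vnorm (vsub x y) ^ 2)))).
    split; [exists x, y, f; auto |].
    rewrite Habs by (apply vnorm_pos; exact Hxy). exact Ht.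
  - intros t [lam [[x [y [f [Hxy [Hf Hl]]]]] Ht]] eps Heps.
    destruct (approx_from_Q b X Q HQ Hdense T (Rabs L) (Rabs_pos L) HLabs
                x y f Hxy Hf eps Heps) as [x2 [y2 [g [Hq Hle]]]].
    eexists. split; [exists x2, y2, g; split; [exact Hq | reflexivity] |].
    rewrite Ht, Hl, Habs by (apply vnorm_pos; exact Hxy). exact Hle.
Qed.
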